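(* Let $\{a_n\}_{n\ge 0}$ be a sequence of positive real numbers and let $N_0$ be a positive integer. (1) Suppose that $a_n^2-a_{n-1}a_{n+1}>0$ for all $n\ge N_0+1$ (strict log-concavity of $\{a_n\}_{n\ge N_0}$), and that $$\left(\frac{a_n}{a_{n-1}}\right)^2<\frac{a_{n-1}}{a_{n-2}}\cdot\frac{a_{n+1}}{a_n}\quad\text{for all } n\ge N_0+2$$ (strict ratio-log-convexity of $\{a_n\}_{n\ge N_0}$). Then for all $n\ge N_0+1$, $$a_n^2(a_n^2-a_{n-1}a_{n+1})>a_{n-1}^2(a_{n+1}^2-a_na_{n+2}).$$ (2) Suppose instead that $\{a_n\}_{n\ge N_0}$ is strictly $2$-log-convex, i.e. setting $b_n=a_{n-1}a_{n+1}-a_n^2$, we have $b_n>0$ for all $n\ge N_0+1$ and $b_n^2<b_{n-1}b_{n+1}$ for all $n\ge N_0+2$, and that the strict ratio-log-convexity condition of part (1) holds. Then the same inequality $a_n^2(a_n^2-a_{n-1}a_{n+1})>a_{n-1}^2(a_{n+1}^2-a_na_{n+2})$ holds for all $n\ge N_0+2$. *)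

From Stdlib Require Import Reals.
Open Scope R_scope.

Definition bseq (a : nat -> R) (n : nat) : R :=
  a (n - 1)%nat * a (n + 1)%nat - a n ^ 2.

From Stdlib Require Import Reals Lra Lia Psatz.
Open Scope R_scope.

(* With x, y, z, w = a_{n-1}, a_n, a_{n+1}, a_{n+2}, one has the identity
     y^2 (y^2 (y^2 - x z) - x^2 (z^2 - y w))
       = (y^2 - x z)^2 (y^2 + x z) + x^2 (y^3 w - x z^3),
   and strict ratio-log-convexity at n+1, cleared of denominators, says exactly
   x z^3 < y^3 w.  So the inequality holds for every n >= N0 + 1 as soon as the
   sequence is positive and strictly ratio-log-convex. *)

Lemma ratio_log_convex_cleared (x y z w : R) :
  0 < x -> 0 < y -> 0 < z ->
  (z / y) ^ 2 < (y / x) * (w / z) -> x * z ^ 3 < y ^ 3 * w.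
Proof.
  intros hx hy hz H.
  assert (scale_pos : 0 < x * y ^ 2 * z)
    by (apply Rmult_lt_0_compat; [apply Rmult_lt_0_compat |]; nra).
  replace (x * z ^ 3) with ((z / y) ^ 2 * (x * y ^ 2 * z)) by (field; lra).
  replace (y ^ 3 * w) with ((y / x) * (w / z) * (x * y ^ 2 * z)) by (field; lra).
  exact (Rmult_lt_compat_r _ _ _ scale_pos H).
Qed.

Lemma quartic_gap_pos (x y z w : R) :
  0 < x -> 0 < y -> 0 < z -> x * z ^ 3 < y ^ 3 * w ->
  y ^ 2 * (y ^ 2 - x * z) > x ^ 2 * (z ^ 2 - y * w).
Proof.
  intros hx hy hz H.
  assert (gap_identity :
    y ^ 2 * (y ^ 2 * (y ^ 2 - x * z) - x ^ 2 * (z ^ 2 - y * w))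
    = (y ^ 2 - x * z) ^ 2 * (y ^ 2 + x * z) + x ^ 2 * (y ^ 3 * w - x * z ^ 3))
    by ring.
  assert (scaled_gap_pos :
    0 < y ^ 2 * (y ^ 2 * (y ^ 2 - x * z) - x ^ 2 * (z ^ 2 - y * w))).
  { rewrite gap_identity; apply Rplus_le_lt_0_compat.
    - apply Rmult_le_pos; [apply pow2_ge_0 | nra].
    - apply Rmult_lt_0_compat; nra. }
  nra.
Qed.

Lemma quartic_gap_of_ratio_log_convex (a : nat -> R) (N0 : nat) :
  (forall n, 0 < a n) ->
  (forall n, (N0 + 2 <= n)%nat ->
     (a n / a (n - 1)%nat) ^ 2 <
     (a (n - 1)%nat / a (n - 2)%nat) * (a (n + 1)%nat / a n)) ->
  forall n, (N0 + 1 <= n)%nat ->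
    a n ^ 2 * (a n ^ 2 - a (n - 1)%nat * a (n + 1)%nat) >
    a (n - 1)%nat ^ 2 * (a (n + 1)%nat ^ 2 - a n * a (n + 2)%nat).
Proof.
  intros Hpos Hratio n Hn.
  pose proof (Hratio (n + 1)%nat ltac:(lia)) as Hnext.
  replace (n + 1 - 1)%nat with n in Hnext by lia.
  replace (n + 1 - 2)%nat with (n - 1)%nat in Hnext by lia.
  replace (n + 1 + 1)%nat with (n + 2)%nat in Hnext by lia.
  apply quartic_gap_pos; auto.
  apply ratio_log_convex_cleared; auto.
Qed.

Theorem theorem4p1 (a : nat -> R) (N0 : nat) :
  (forall n, 0 < a n) -> (0 < N0)%nat ->
  ( (* part (1) *)
    (forall n, (N0 + 1 <= n)%nat -> a n ^ 2 - a (n - 1)%nat * a (n + 1)%nat > 0) ->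
    (forall n, (N0 + 2 <= n)%nat ->
       (a n / a (n - 1)%nat) ^ 2 <
       (a (n - 1)%nat / a (n - 2)%nat) * (a (n + 1)%nat / a n)) ->
    forall n, (N0 + 1 <= n)%nat ->
      a n ^ 2 * (a n ^ 2 - a (n - 1)%nat * a (n + 1)%nat) >
      a (n - 1)%nat ^ 2 * (a (n + 1)%nat ^ 2 - a n * a (n + 2)%nat) )
  /\
  ( (* part (2) *)
    (forall n, (N0 + 1 <= n)%nat -> bseq a n > 0) ->
    (forall n, (N0 + 2 <= n)%nat ->
       bseq a n ^ 2 < bseq a (n - 1)%nat * bseq a (n + 1)%nat) ->
    (forall n, (N0 + 2 <= n)%nat ->
       (a n / a (n - 1)%nat) ^ 2 <
       (a (n - 1)%nat / a (n - 2)%nat) * (a (n + 1)%nat / a n)) ->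
    forall n, (N0 + 2 <= n)%nat ->
      a n ^ 2 * (a n ^ 2 - a (n - 1)%nat * a (n + 1)%nat) >
      a (n - 1)%nat ^ 2 * (a (n + 1)%nat ^ 2 - a n * a (n + 2)%nat) ).
Proof.
  intros Hpos _; split.
  - intros _ Hratio n Hn.
    exact (quartic_gap_of_ratio_log_convex a N0 Hpos Hratio n Hn).
  - intros _ _ Hratio n Hn.
    exact (quartic_gap_of_ratio_log_convex a N0 Hpos Hratio n ltac:(lia)).
Qed.
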